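(* Assume $p_1<1$, and assume either that $\mu\le1$, or that $\mu>1$ and $p_0+\cdots+p_r<1$. Then for this integer $r\ge0$, the equation $G_r(t)=t$ has a unique solution $t=q_{[0,r]}$ in $[0,1]$, and $$\mathbf{P}[M\le r]=q_{[0,r]}.$$
   Context: Let $p=(p_0,p_1,p_2,\dots)$ be a probability distribution on the nonnegative integers with mean $\mu=\sum_k kp_k\in(0,\infty)$, and let $\tau(p)$ be a Galton–Watson tree with offspring distribution $p$: it starts with a single root at generation $0$, and every vertex independently has $k$ children with probability $p_k$. The out-degree of a vertex is its number of children. $M_n$ denotes the maximal out-degree among the vertices of generation $n$ (with $M_n=0$ if generation $n$ is empty), and $M=\sup_{n\ge0}M_n$ is the global maximal out-degree (possibly infinite). For $x\in[0,1]$, $G_r(x)=\sum_{k=0}^r p_kx^k$ is the generating function of $p$ truncated at $r$. *)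

From Stdlib Require Import Reals Lra List.
Import ListNotations.
Open Scope R_scope.

Definition Gtrunc (p : nat -> R) (r : nat) (x : R) : R :=
  sum_f_R0 (fun k => p k * x ^ k) r.

Inductive ptree : Type := PNode : list ptree -> ptree.

Fixpoint tuples {A : Type} (k : nat) (l : list A) : list (list A) :=
  match k with
  | O => [[]]
  | S k' => flat_map (fun x => map (cons x) (tuples k' l)) l
  end.

(* The (finitely many, pairwise distinct) possible shapes of the first n
   generations' offspring structure of a GW tree (generations 0..n, with the
   vertices of generation n shown as leaves since their offspring is not
   revealed), on the event that every vertex of generations 0..n-1 has at most
   r children. *)
Fixpoint prefixes (r n : nat) : list ptree :=
  match n with
  | O => [PNode []]
  | S n' => flat_map (fun k => map PNode (tuples k (prefixes r n'))) (seq 0 (S r))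
  end.

(* GW probability of observing the depth-n prefix t: product of p_{deg v}
   over the vertices v of generations 0..n-1 (independent offspring counts). *)
Fixpoint gw_weight (p : nat -> R) (n : nat) (t : ptree) : R :=
  match n with
  | O => 1
  | S n' =>
      match t with
      | PNode ts => p (length ts) * fold_right (fun s acc => gw_weight p n' s * acc) 1 ts
      end
  end.

(* P[ M_0 <= r, ..., M_{n-1} <= r ] for the Galton-Watson tree tau(p). *)
Definition prob_max_upto (p : nat -> R) (r n : nat) : R :=
  fold_right Rplus 0 (map (gw_weight p n) (prefixes r n)).

(* P[M <= r] = lim_n P[max_{k<n} M_k <= r] (continuity from above of the law
   of tau(p), since {M <= r} is the decreasing intersection of these events). *)
Definition is_prob_M_le (p : nat -> R) (r : nat) (l : R) : Prop :=
  Un_cv (prob_max_upto p r) l.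

(* The event {max_{k<n} M_k <= r} splits according to the number k <= r of
   children of the root, and then into k independent copies of the same event
   one generation shorter; hence its probability P_n satisfies
   P_{n+1} = G_r(P_n) with P_0 = 1.  Since G_r is nondecreasing on [0,1] with
   G_r(1) <= 1, the P_n decrease to a fixed point of G_r.

   Uniqueness: if a < b were two fixed points in [0,1], the divided difference
   (G_r(b) - G_r(a)) / (b - a) = sum_k p_k (b^k - a^k)/(b - a) would equal 1.
   When the mean is at most 1 this is impossible because the divided difference
   of t^k is at most k, strictly so for k >= 2, and p_1 < 1.  When
   G_r(1) < 1 the point b = 1 is excluded, and convexity of G_r (the divided
   differences grow with the interval) would force G_r(1) - b >= 1 - b,
   that is G_r(1) >= 1. *)

From Stdlib Require Import Reals Lra Lia List.
Open Scope R_scope.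

Definition sumL (l : list R) : R := fold_right Rplus 0 l.

Lemma sumL_app (l1 l2 : list R) : sumL (l1 ++ l2) = sumL l1 + sumL l2.
Proof. induction l1 as [|x l1 IH]; simpl; [lra|]. unfold sumL in *; simpl; rewrite IH; lra. Qed.

Lemma sumL_flat_map {A B : Type} (f : B -> R) (g : A -> list B) (l : list A) :
  sumL (map f (flat_map g l)) = sumL (map (fun x => sumL (map f (g x))) l).
Proof.
  induction l as [|x l IH]; simpl; [reflexivity|].
  rewrite map_app, sumL_app, IH. reflexivity.
Qed.

Lemma sumL_scal {A : Type} (f : A -> R) (c : R) (l : list A) :
  sumL (map (fun y => c * f y) l) = c * sumL (map f l).
Proof. induction l as [|x l IH]; unfold sumL in *; simpl; [ring|rewrite IH; ring]. Qed.

Lemma sumL_ext_in {A : Type} (f g : A -> R) (l : list A) :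
  (forall x, In x l -> f x = g x) -> sumL (map f l) = sumL (map g l).
Proof. intros H; f_equal; apply map_ext_in; exact H. Qed.

Lemma sumL_seq (f : nat -> R) (r : nat) : sumL (map f (seq 0 (S r))) = sum_f_R0 f r.
Proof.
  induction r as [|r IH]; [unfold sumL; simpl; ring|].
  rewrite seq_S, map_app, sumL_app, IH. unfold sumL; simpl; ring.
Qed.

Lemma length_tuples {A : Type} (k : nat) (l : list A) (ts : list A) :
  In ts (tuples k l) -> length ts = k.
Proof.
  revert ts; induction k as [|k IH]; simpl; intros ts H.
  - destruct H as [<-|[]]; reflexivity.
  - apply in_flat_map in H as [x [_ H]]. apply in_map_iff in H as [t [<- H]].
    simpl; f_equal; auto.
Qed.

Definition prodL {A : Type} (w : A -> R) (ts : list A) : R :=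
  fold_right (fun s acc => w s * acc) 1 ts.

Lemma sumL_prodL_tuples {A : Type} (w : A -> R) (l : list A) (k : nat) :
  sumL (map (prodL w) (tuples k l)) = sumL (map w l) ^ k.
Proof.
  induction k as [|k IH]; simpl; [unfold sumL; simpl; ring|].
  rewrite sumL_flat_map.
  rewrite (sumL_ext_in _ (fun x => w x * sumL (map (prodL w) (tuples k l)))).
  - rewrite IH, (sumL_ext_in _ (fun x => sumL (map w l) ^ k * w x)) by (intros; ring).
    rewrite sumL_scal; ring.
  - intros x _; rewrite map_map. exact (sumL_scal (prodL w) (w x) _).
Qed.

Lemma prob_max_upto_0 (p : nat -> R) (r : nat) : prob_max_upto p r 0 = 1.
Proof. unfold prob_max_upto; simpl; ring. Qed.

Lemma prob_max_upto_S (p : nat -> R) (r n : nat) :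
  prob_max_upto p r (S n) = Gtrunc p r (prob_max_upto p r n).
Proof.
  unfold prob_max_upto, Gtrunc; fold sumL; cbn [prefixes].
  rewrite sumL_flat_map, <- sumL_seq.
  apply sumL_ext_in; intros k _; rewrite map_map.
  rewrite (sumL_ext_in _ (fun ts => p k * prodL (gw_weight p n) ts)).
  - rewrite sumL_scal, sumL_prodL_tuples. reflexivity.
  - intros ts Hts; simpl; rewrite (length_tuples _ _ _ Hts). reflexivity.
Qed.

Section MonotoneIteration.

Variable f : R -> R.
Variable u : nat -> R.

Hypothesis f_mono : forall x y, 0 <= x <= y -> y <= 1 -> f x <= f y.
Hypothesis f0_ge0 : 0 <= f 0.
Hypothesis f1_le1 : f 1 <= 1.
Hypothesis f_cont : forall x, 0 <= x <= 1 -> continuity_pt f x.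
Hypothesis u_0 : u 0%nat = 1.
Hypothesis u_S : forall n, u (S n) = f (u n).

Lemma iterate_in_unit (n : nat) : 0 <= u n <= 1.
Proof.
  induction n as [|n IH]; [lra|]. rewrite u_S.
  pose proof (f_mono 0 (u n) ltac:(lra) ltac:(lra)).
  pose proof (f_mono (u n) 1 ltac:(lra) ltac:(lra)). lra.
Qed.

Lemma iterate_decreasing : Un_decreasing u.
Proof.
  intro n; induction n as [|n IH].
  - rewrite u_S, u_0; exact f1_le1.
  - pose proof (f_mono (u (S n)) (u n)) as H; rewrite <- !u_S in H.
    apply H; [pose proof (iterate_in_unit (S n)); lra|apply iterate_in_unit].
Qed.

Lemma iterate_cv_fixpoint : exists L, (0 <= L <= 1 /\ f L = L) /\ Un_cv u L.
Proof.
  destruct (decreasing_cv u iterate_decreasing) as [L HL].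
  { exists 0; intros x [n ->]; unfold opp_seq; pose proof (iterate_in_unit n); lra. }
  assert (HL1 : L <= 1) by (rewrite <- u_0; exact (decreasing_ineq u L iterate_decreasing HL 0%nat)).
  assert (HL0 : 0 <= L).
  { apply (@Rle_cv_lim (fun _ => 0) u); [intro n; exact (proj1 (iterate_in_unit n))| |exact HL].
    intros e He; exists 0%nat; intros; unfold R_dist; rewrite Rminus_diag, Rabs_R0; lra. }
  exists L; split; [split; [lra|]|exact HL].
  apply (UL_sequence (fun n => f (u n))).
  - apply continuity_seq; [apply f_cont; lra|exact HL].
  - intros e He; destruct (HL e He) as [N HN]; exists N; intros n Hn.
    rewrite <- u_S; apply HN; lia.
Qed.

End MonotoneIteration.

Fixpoint divdiff_pow (k : nat) (x y : R) : R :=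
  match k with O => 0 | S k' => y ^ k' + x * divdiff_pow k' x y end.

Lemma divdiff_powE (k : nat) (x y : R) : y ^ k - x ^ k = (y - x) * divdiff_pow k x y.
Proof.
  induction k as [|k IH]; simpl; [ring|].
  replace (y * y ^ k - x * x ^ k) with ((y - x) * y ^ k + x * (y ^ k - x ^ k)) by ring.
  rewrite IH; ring.
Qed.

Lemma divdiff_pow_ge0 (k : nat) (x y : R) : 0 <= x -> 0 <= y -> 0 <= divdiff_pow k x y.
Proof.
  intros Hx Hy; induction k as [|k IH]; simpl; [lra|].
  pose proof (pow_le y k Hy); nra.
Qed.

Lemma divdiff_pow_le2 (k : nat) (x y x' y' : R) :
  0 <= x <= x' -> 0 <= y <= y' -> divdiff_pow k x y <= divdiff_pow k x' y'.
Proof.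
  intros Hx Hy; induction k as [|k IH]; simpl; [lra|].
  pose proof (pow_incr y y' k Hy). pose proof (divdiff_pow_ge0 k x y ltac:(lra) ltac:(lra)). nra.
Qed.

Lemma divdiff_pow_le (k : nat) (x y : R) :
  0 <= x <= 1 -> 0 <= y <= 1 -> divdiff_pow k x y <= INR k.
Proof.
  intros Hx Hy; induction k as [|k IH]; cbn [divdiff_pow]; [simpl; lra|].
  rewrite S_INR. pose proof (pow_incr y 1 k Hy). rewrite pow1 in *.
  pose proof (divdiff_pow_ge0 k x y ltac:(lra) ltac:(lra)). nra.
Qed.

Lemma divdiff_pow_S_le (k : nat) (x y : R) :
  0 <= x <= 1 -> 0 <= y <= 1 -> divdiff_pow (S k) x y <= 1 + x * INR k.
Proof.
  intros Hx Hy; cbn [divdiff_pow].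
  pose proof (pow_incr y 1 k Hy). rewrite pow1 in *.
  pose proof (divdiff_pow_le k x y Hx Hy). nra.
Qed.

(* For k >= 2 the bound 1 + x (k - 1) is below k; the excess is traded for a
   weight on the term k = 1, where p_1 < 1 can then be used. *)
Lemma divdiff_pow_le_mean (k : nat) (x y : R) : 0 <= x <= 1 -> 0 <= y <= 1 ->
  divdiff_pow k x y <= (1 + x) / 2 * INR k + (1 - x) / 2 * (if Nat.eqb k 1 then 1 else 0).
Proof.
  intros Hx Hy. destruct k as [|[|k]]; simpl Nat.eqb; cbv iota.
  - simpl; lra.
  - simpl; lra.
  - pose proof (divdiff_pow_S_le (S k) x y Hx Hy). rewrite !S_INR in *.
    pose proof (pos_INR k). nra.
Qed.

Lemma sum_f_R0_delta (f : nat -> R) (i r : nat) :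
  sum_f_R0 (fun k => f k * (if Nat.eqb k i then 1 else 0)) r
  = if Nat.leb i r then f i else 0.
Proof.
  induction r as [|r IH]; cbn [sum_f_R0].
  - destruct i; simpl; ring.
  - rewrite IH.
    destruct (Nat.leb_spec i r), (Nat.leb_spec i (S r)), (Nat.eqb_spec (S r) i);
      try lia; subst; ring.
Qed.

Definition Gslope (p : nat -> R) (r : nat) (a b : R) : R :=
  sum_f_R0 (fun k => p k * divdiff_pow k a b) r.

Lemma Gtrunc_sub (p : nat -> R) (r : nat) (a b : R) :
  Gtrunc p r b - Gtrunc p r a = (b - a) * Gslope p r a b.
Proof.
  unfold Gtrunc, Gslope; rewrite scal_sum, <- minus_sum.
  apply sum_eq; intros k _; rewrite Rmult_assoc, (Rmult_comm _ (b - a)), <- divdiff_powE; ring.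
Qed.

Lemma Gtrunc_1 (p : nat -> R) (r : nat) : Gtrunc p r 1 = sum_f_R0 p r.
Proof. unfold Gtrunc; apply sum_eq; intros; rewrite pow1; ring. Qed.

Lemma Gtrunc_le (p : nat -> R) (r : nat) (a b : R) :
  (forall k, 0 <= p k) -> 0 <= a <= b -> Gtrunc p r a <= Gtrunc p r b.
Proof.
  intros Hp H; apply sum_Rle; intros k _.
  apply Rmult_le_compat_l; [apply Hp|apply pow_incr; exact H].
Qed.

Lemma Gtrunc_ge0 (p : nat -> R) (r : nat) (t : R) :
  (forall k, 0 <= p k) -> 0 <= t -> 0 <= Gtrunc p r t.
Proof.
  intros Hp Ht; apply cond_pos_sum; intro k.
  apply Rmult_le_pos; [apply Hp|apply pow_le; exact Ht].
Qed.

Lemma Gslope_lt1_of_mean_le1 (p : nat -> R) (r : nat) (a b : R) :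
  (forall k, 0 <= p k) -> p 1%nat < 1 -> sum_f_R0 (fun k => INR k * p k) r <= 1 ->
  0 <= a < 1 -> 0 <= b <= 1 -> Gslope p r a b < 1.
Proof.
  intros Hp Hp1 Hmean Ha Hb.
  apply (Rle_lt_trans _ ((1 + a) / 2 * sum_f_R0 (fun k => INR k * p k) r
                         + (1 - a) / 2 * (if Nat.leb 1 r then p 1%nat else 0))).
  - rewrite <- sum_f_R0_delta, !scal_sum, <- sum_plus.
    apply sum_Rle; intros k _.
    pose proof (divdiff_pow_le_mean k a b ltac:(lra) Hb). pose proof (Hp k). nra.
  - pose proof (Hp 1%nat). destruct (Nat.leb 1 r); nra.
Qed.

Lemma Gslope_le2 (p : nat -> R) (r : nat) (a b a' b' : R) :
  (forall k, 0 <= p k) -> 0 <= a <= a' -> 0 <= b <= b' ->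
  Gslope p r a b <= Gslope p r a' b'.
Proof.
  intros Hp Ha Hb; apply sum_Rle; intros k _.
  apply Rmult_le_compat_l; [apply Hp|apply divdiff_pow_le2; assumption].
Qed.

Lemma Gtrunc_two_fixpoints_False (p : nat -> R) (r : nat) (a b : R) :
  (forall k, 0 <= p k) -> p 1%nat < 1 ->
  sum_f_R0 (fun k => INR k * p k) r <= 1 \/ sum_f_R0 p r < 1 ->
  0 <= a -> a < b -> b <= 1 -> Gtrunc p r a = a -> Gtrunc p r b = b -> False.
Proof.
  intros Hp Hp1 [Hmean|Hmass] Ha Hab Hb Fa Fb;
    assert (Hslope : Gslope p r a b = 1)
      by (pose proof (Gtrunc_sub p r a b) as E; rewrite Fa, Fb in E;
          apply (Rmult_eq_reg_l (b - a)); lra).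
  - pose proof (Gslope_lt1_of_mean_le1 p r a b Hp Hp1 Hmean ltac:(lra) ltac:(lra)). lra.
  - assert (Hb1 : b <> 1) by (intros ->; rewrite Gtrunc_1 in Fb; lra).
    pose proof (Gslope_le2 p r a b b 1 Hp ltac:(lra) ltac:(lra)).
    pose proof (Gtrunc_sub p r b 1) as E; rewrite Gtrunc_1, Fb in E. nra.
Qed.

Lemma Gtrunc_fixpoint_unique (p : nat -> R) (r : nat) (a b : R) :
  (forall k, 0 <= p k) -> p 1%nat < 1 ->
  sum_f_R0 (fun k => INR k * p k) r <= 1 \/ sum_f_R0 p r < 1 ->
  0 <= a <= 1 -> 0 <= b <= 1 -> Gtrunc p r a = a -> Gtrunc p r b = b -> a = b.
Proof.
  intros Hp Hp1 Hcase Ha Hb Fa Fb.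
  destruct (Rtotal_order a b) as [Hab|[Hab|Hab]]; [exfalso| exact Hab |exfalso].
  - exact (Gtrunc_two_fixpoints_False p r a b Hp Hp1 Hcase ltac:(lra) Hab ltac:(lra) Fa Fb).
  - exact (Gtrunc_two_fixpoints_False p r b a Hp Hp1 Hcase ltac:(lra) Hab ltac:(lra) Fb Fa).
Qed.

Theorem lemma2p5 (p : nat -> R) (mu : R) (r : nat)
  (p_nonneg : forall k, 0 <= p k)
  (p_sum : infinite_sum p 1)
  (p_mean : infinite_sum (fun k => INR k * p k) mu)
  (mu_pos : 0 < mu)
  (p1_lt : p 1%nat < 1)
  (hyp : mu <= 1 \/ (1 < mu /\ sum_f_R0 p r < 1)) :
  exists q : R,
    (0 <= q <= 1 /\ Gtrunc p r q = q) /\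
    (forall t : R, 0 <= t <= 1 -> Gtrunc p r t = t -> t = q) /\
    is_prob_M_le p r q.
Proof.
  assert (Hmass : sum_f_R0 p r <= 1) by (apply sum_incr; auto).
  assert (Hmean : sum_f_R0 (fun k => INR k * p k) r <= mu).
  { apply sum_incr; [exact p_mean|]. intro k; apply Rmult_le_pos; [apply pos_INR|apply p_nonneg]. }
  destruct (iterate_cv_fixpoint (Gtrunc p r) (prob_max_upto p r)) as [q [[Hq Gq] Hcv]].
  - intros x y Hxy _; apply Gtrunc_le; auto.
  - apply Gtrunc_ge0; auto; lra.
  - rewrite Gtrunc_1; exact Hmass.
  - intros x _; apply continuity_finite_sum.
  - apply prob_max_upto_0.
  - apply prob_max_upto_S.
  - exists q; split; [auto|split; [|exact Hcv]].
    intros t Ht Gt; apply (Gtrunc_fixpoint_unique p r); auto.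
    destruct hyp as [Hmu|[_ Hlt]]; [left; lra|right; exact Hlt].
Qed.
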